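(* Let $f(x,y)=x^2y$. If $\{x^2y : x,y\in\widetilde C\} = [\tfrac{8}{27},1]$, then $\{x^2y : x,y\in C\} = [0,1]$.
   Context: $C=\{\sum_{k\ge1}\alpha_k3^{-k}:\alpha_k\in\{0,2\}\}$ is the middle-thirds Cantor set, and $\widetilde C = C\cap[\tfrac23,1]$. *)

From Stdlib Require Import Reals.
From Coquelicot Require Import Coquelicot.
Open Scope R_scope.

(* Middle-thirds Cantor set: x = sum_{k>=1} alpha_k 3^{-k}, alpha_k in {0,2}.
   Index shift: the n-th term (n >= 0) is alpha_{n+1} / 3^(n+1). *)
Definition cantor (x : R) : Prop :=
  exists alpha : nat -> R,
    (forall n, alpha n = 0 \/ alpha n = 2) /\
    is_series (fun n => alpha n / 3 ^ (S n)) x.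

Definition cantor_tilde (x : R) : Prop := cantor x /\ 2/3 <= x <= 1.

Definition img_x2y (A : R -> Prop) (z : R) : Prop :=
  exists x y, A x /\ A y /\ z = x ^ 2 * y.

(* The Cantor set lies in [0, 1] and is closed under x |-> x / 3 (shift the
   digits by one place), so the image of C under x^2 y lies in [0, 1] and
   contains the intervals 3^-n [8/27, 1] for every n.  Since 8/27 <= 1/3,
   consecutive intervals overlap and together they cover (0, 1]; finally
   0 = 0^2 * 0. *)
From Stdlib Require Import Reals Lra ssreflect.
From Coquelicot Require Import Coquelicot.
Open Scope R_scope.

Lemma is_series_le (a b : nat -> R) (la lb : R) :
  is_series a la -> is_series b lb -> (forall n, a n <= b n) -> la <= lb.
Proof.
  move=> Ha Hb Hab.
  apply: (is_lim_seq_le (sum_n a) (sum_n b) la lb _ Ha Hb) => n.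
  exact: sum_n_m_le.
Qed.

Lemma is_series_zero : is_series (fun _ : nat => 0) 0.
Proof.
  suff : is_lim_seq (sum_n (fun _ : nat => 0)) 0 by [].
  apply: (is_lim_seq_ext (fun _ => 0)); last exact: is_lim_seq_const.
  move=> n; rewrite sum_n_const; ring.
Qed.

Lemma is_series_ternary_twos : is_series (fun n => 2 / 3 ^ S n) 1.
Proof.
  have Hq : Rabs (1 / 3) < 1 by rewrite Rabs_right; lra.
  have := is_series_scal_r (2 / 3) _ _ (is_series_geom _ Hq).
  replace (/ (1 - 1 / 3) * (2 / 3)) with 1 by field.
  apply: is_series_ext => n.
  have H3n : 3 ^ n <> 0 by apply: pow_nonzero; lra.
  rewrite /= /Rdiv Rmult_1_l pow_inv; field; lra.
Qed.

Lemma cantor_bounds (x : R) : cantor x -> 0 <= x <= 1.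
Proof.
  move=> [alpha [Halpha Hx]].
  have Hterm n : 0 <= alpha n / 3 ^ S n <= 2 / 3 ^ S n.
  { have H3n : 0 < / 3 ^ S n by apply/Rinv_0_lt_compat/pow_lt; lra.
    rewrite /Rdiv; case: (Halpha n) => ->; nra. }
  split.
  - exact: (is_series_le _ _ _ _ is_series_zero Hx (fun n => proj1 (Hterm n))).
  - exact: (is_series_le _ _ _ _ Hx is_series_ternary_twos (fun n => proj2 (Hterm n))).
Qed.

Lemma cantor0 : cantor 0.
Proof.
  exists (fun _ => 0); split; first by left.
  apply: (is_series_ext (fun _ => 0) _ 0 _ is_series_zero) => n.
  by rewrite /Rdiv Rmult_0_l.
Qed.

Lemma cantor_div3 (y : R) : cantor y -> cantor (y / 3).
Proof.
  move=> [alpha [Halpha Hy]].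
  exists (fun n => if n is S m then alpha m else 0); split.
  - by case=> [|m]; [left | apply: Halpha].
  - apply: is_series_decr_1.
    have := is_series_scal_r (/ 3) _ _ Hy.
    replace (plus _ _) with (y * / 3)
      by (rewrite /plus /opp /=; field).
    apply: is_series_ext => n.
    have H3n : 3 ^ n <> 0 by apply: pow_nonzero; lra.
    rewrite /=; field; lra.
Qed.

Lemma img_x2y_mono (A B : R -> Prop) (z : R) :
  (forall x, A x -> B x) -> img_x2y A z -> img_x2y B z.
Proof. by move=> AB [x [y [Ax [Ay ->]]]]; exists x, y; split; [|split]; auto. Qed.

Lemma img_x2y_unit_interval (A : R -> Prop) (z : R) :
  (forall x, A x -> 0 <= x <= 1) -> img_x2y A z -> 0 <= z <= 1.
Proof.
  move=> HA [x [y [/HA Hx [/HA Hy ->]]]].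
  have Hx2 : 0 <= x ^ 2 <= 1 by split; [apply: pow2_ge_0 | rewrite /=; nra].
  split; nra.
Qed.

Lemma img_x2y_div3 (A : R -> Prop) (z : R) :
  (forall y, A y -> A (y / 3)) -> img_x2y A z -> img_x2y A (z / 3).
Proof.
  move=> HA [x [y [Ax [Ay ->]]]].
  exists x, (y / 3); split; [done | split; [exact: HA | rewrite /Rdiv; ring]].
Qed.

Section TernaryCover.

Variables (P : R -> Prop) (a : R).
Hypothesis a_le_third : a <= 1 / 3.
Hypothesis P_on_interval : forall z, a <= z <= 1 -> P z.
Hypothesis P_div3 : forall z, P z -> P (z / 3).

(* The step from [a/3^n, 1] to [a/3^(n+1), 1] needs 3 a/3^n <= 1, i.e. a <= 1/3. *)
Lemma div3_closed_on_geometric_interval (n : nat) (z : R) :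
  a * (1 / 3) ^ n <= z <= 1 -> P z.
Proof.
  elim: n z => [|n IH] z Hz; first by apply: P_on_interval; rewrite /= in Hz; lra.
  have Hpow : 0 < (1 / 3) ^ n <= 1.
  { split; first by apply: pow_lt; lra.
    by rewrite -[X in _ <= X](pow1 n); apply: pow_incr; lra. }
  rewrite /= in Hz.
  case: (Rle_lt_dec (a * (1 / 3) ^ n) z) => Hcase; first by apply: IH; lra.
  replace z with (3 * z / 3) by field.
  apply/P_div3/IH; nra.
Qed.

Lemma div3_closed_on_unit_interval (z : R) : 0 < a -> 0 < z <= 1 -> P z.
Proof.
  move=> Ha Hz.
  have Hthird : Rabs (1 / 3) < 1 by rewrite Rabs_right; lra.
  have [N HN] := pow_lt_1_zero _ Hthird (z / a) ltac:(apply: Rdiv_lt_0_compat; lra).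
  have HpowN := HN N (Nat.le_refl N).
  rewrite Rabs_right in HpowN; last by apply/Rle_ge/pow_le; lra.
  apply: (div3_closed_on_geometric_interval N); split; last lra.
  have : a * (1 / 3) ^ N < a * (z / a) by apply: Rmult_lt_compat_l.
  replace (a * (z / a)) with z by (field; lra); lra.
Qed.

End TernaryCover.

Theorem lemma3p3 :
  (forall z, img_x2y cantor_tilde z <-> 8/27 <= z <= 1) ->
  (forall z, img_x2y cantor z <-> 0 <= z <= 1).
Proof.
  move=> Htilde z; split; first exact/img_x2y_unit_interval/cantor_bounds.
  move=> [Hz0 Hz1]; case: (Rle_lt_or_eq_dec _ _ Hz0) => [Hz | <-].
  - apply: (div3_closed_on_unit_interval _ (8 / 27)); try lra.
    + by move=> w /Htilde; apply: img_x2y_mono => x [].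
    + by move=> w; apply/img_x2y_div3/cantor_div3.
  - exists 0, 0; split; [exact: cantor0 | split; [exact: cantor0 | ring]].
Qed.
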